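(* Let $\mathcal{A}$ be an associative algebra over a commutative unital ring containing $\mathbb{Q}$, and let $D_1,D_2$ be derivations of $\mathcal{A}$ with $D_1D_2-D_2D_1=D_1$. For $n\ge 0$ let $[D_2]_n=D_2(D_2-1)(D_2-2)\cdots(D_2-n+1)$ (with $[D_2]_0=\mathrm{id}_{\mathcal{A}}$, and integers meaning integer multiples of $\mathrm{id}_{\mathcal{A}}$). Then the multiplication on $\mathcal{A}[[\hbar]]$ given for $a,b\in\mathcal{A}$ by $$a\star b=\sum_{n=0}^{\infty}\frac{\hbar^n}{n!}\,D_1^n(a)\,[D_2]_n(b)$$ is associative; thus $D_1\smile D_2$ is an integrable infinitesimal deformation of $\mathcal{A}$ with this integral.
   Context: $(f\smile g)(a,b)=f(a)g(b)$ for linear maps $f,g:\mathcal{A}\to\mathcal{A}$. *)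

From mathcomp Require Import all_boot all_order all_algebra.
Set Implicit Arguments. Unset Strict Implicit. Unset Printing Implicit Defensive.
Import GRing.Theory.
Local Open Scope ring_scope.

(* The algebra A is modelled as an R-module with an (explicitly given)
   associative bilinear multiplication [mul]; no unit is assumed. *)
Section StarProduct.
Variables (R : comUnitRingType) (A : lmodType R) (mul : A -> A -> A).

Fixpoint falling (D : A -> A) (n : nat) (b : A) : A :=
  match n with
  | 0 => b
  | k.+1 => D (falling D k b) - (falling D k b) *+ k
  end.

Definition star_coef (D1 D2 : A -> A) (n : nat) (a b : A) : A :=
  (n`!%:R)^-1 *: mul (iter n D1 a) (falling D2 n b).

(* formal power series A[[hbar]] as coefficient sequences; the star product
   extended hbar-bilinearly: (f * g)_N = sum_{i+j+n=N} mu_n(f_i, g_j) *)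
Definition star (D1 D2 : A -> A) (f g : nat -> A) : nat -> A :=
  fun N => \sum_(i < N.+1) \sum_(j < N.+1 | (i + j <= N)%N)
             star_coef D1 D2 (N - i - j) (f i) (g j).

Definition is_derivation (D : A -> A) : Prop :=
  forall a b, D (mul a b) = mul (D a) b + mul a (D b).
End StarProduct.

From mathcomp Require Import all_boot all_order all_algebra.
From mathcomp Require Import zify ring.
From Stdlib Require Import FunctionalExtensionality.
Set Implicit Arguments. Unset Strict Implicit. Unset Printing Implicit Defensive.
Import GRing.Theory.
Local Open Scope ring_scope.

(* The proof separates bookkeeping from algebra.
   1. For any family mu_n of biadditive maps on an abelian group V, let
      (f * g)_N = sum_{i+j+n=N} mu_n(f_i, g_j) on sequences (smul).  Expanding
      f, g, h into monomials p hbar^a, the coefficient of hbar^N in (f*g)*h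
      (resp. f*(g*h)) is a sum of the degree-K parts
         assocl K p q r = sum_{k<=K} mu_{K-k}(mu_k(p,q), r),
         assocr K p q r = sum_{k<=K} mu_{K-k}(p, mu_k(q,r)),
      so assocl = assocr for all K implies associativity (smul_assoc).
   2. For mu_n = star_coef, both assocl K and assocr K are expanded into one
      common double sum (assoc_term).  The tools are a Leibniz rule for the
      shifted falling powers (D - s)(D - s - d)...(D - s - (n-1)d) of a
      derivation, and the commutation rule D1^l o [D2 - s]_m = [D2 - s + l]_m o D1^l
      coming from [D1, D2] = D1, plus the identity C(a+b,a)/(a+b)! = 1/(a! b!). *)

Lemma sum_window (V : zmodType) (G : nat -> V) lo hi N : (lo + hi <= N)%N ->
  \sum_(i < N.+1 | (lo <= i)%N && (i + hi <= N)%N) G i =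
  \sum_(k < (N - lo - hi).+1) G (lo + k)%N.
Proof.
move=> h; rewrite (eq_bigl (fun i : 'I_N.+1 => (i + hi <= N)%N && (lo <= i)%N));
  last by move=> i; rewrite andbC.
rewrite -(big_geq_mkord lo N.+1 (fun i => i + hi <= N)%N G).
transitivity (\sum_(lo <= i < (N - hi).+1) G i).
  rewrite (big_nat_widen lo (N - hi).+1 N.+1) ?ltnS ?leq_subr //.
  by apply: eq_bigl => i; apply/idP/idP => hi'; lia.
rewrite -{1}(add0n lo) big_addn big_mkord.
have -> : ((N - hi).+1 - lo = (N - lo - hi).+1)%N by lia.
by apply: eq_bigr => k _; rewrite addnC.
Qed.

Lemma sum_triangle (V : zmodType) K (F : nat -> nat -> V) :
  \sum_(c < K.+1) \sum_(k < (K - c).+1) F c k =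
  \sum_(P < K.+1) \sum_(c < P.+1) F c (P - c)%N.
Proof.
elim: K => [|K IH]; first by rewrite !big_ord1.
rewrite big_ord_recr /= subnn big_ord1 [RHS]big_ord_recr /= -IH.
rewrite [X in _ = _ + X]big_ord_recr /= subnn addrA; congr (_ + _).
rewrite -big_split /=; apply: eq_bigr => c _.
by rewrite subSn ?big_ord_recr // -ltnS.
Qed.

Lemma pascal_sum (V : zmodType) (X : nat -> V) n :
  \sum_(j < n.+1) (X j.+1 + X j) *+ 'C(n, j) = \sum_(j < n.+2) X j *+ 'C(n.+1, j).
Proof.
have shift : \sum_(j < n.+1) X j *+ 'C(n, j) = X 0%N + \sum_(j < n.+1) X j.+1 *+ 'C(n, j.+1).
  by rewrite big_ord_recl [in RHS]big_ord_recr /= bin0 bin_small // mulr0n addr0.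
under eq_bigr do rewrite mulrnDl.
rewrite big_split /= shift [RHS]big_ord_recl /= addrCA; congr (_ + _).
by rewrite -big_split; apply: eq_bigr => j _; rewrite /bump /= binS mulrnDr addrC.
Qed.

Section SeriesProduct.
Variables (V : zmodType) (mu : nat -> V -> V -> V).
Hypothesis mu_addl : forall n b, {morph mu n ^~ b : x y / x + y}.
Hypothesis mu_addr : forall n a, {morph mu n a : x y / x + y}.

Lemma mu0l n b : mu n 0 b = 0.
Proof. by apply/(addrI (mu n 0 b)); rewrite -mu_addl !addr0. Qed.

Lemma mu0r n a : mu n a 0 = 0.
Proof. by apply/(addrI (mu n a 0)); rewrite -mu_addr !addr0. Qed.

Definition smul (f g : nat -> V) (N : nat) : V :=
  \sum_(i < N.+1) \sum_(j < N.+1 | (i + j <= N)%N) mu (N - i - j) (f i) (g j).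

Definition monom (a : nat) (p : V) : nat -> V := fun i => if i == a then p else 0.

(* Degree-K parts of (p*q)*r and p*(q*r) for p, q, r of degree 0. *)
Definition assocl (K : nat) (p q r : V) : V :=
  \sum_(k < K.+1) mu (K - k) (mu k p q) r.
Definition assocr (K : nat) (p q r : V) : V :=
  \sum_(k < K.+1) mu (K - k) p (mu k q r).

Lemma smul_local {f f' g g' : nat -> V} {N : nat} :
  (forall i, (i <= N)%N -> f i = f' i) -> (forall j, (j <= N)%N -> g j = g' j) ->
  smul f g N = smul f' g' N.
Proof.
move=> ef eg; apply: eq_bigr => i _; apply: eq_bigr => j _.
by rewrite ef ?eg // -ltnS.
Qed.

Lemma smul_suml I (r : seq I) (P : pred I) (F : I -> nat -> V) g N :
  smul (fun i => \sum_(k <- r | P k) F k i) g N = \sum_(k <- r | P k) smul (F k) g N.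
Proof.
rewrite /smul; under eq_bigr => i _ do under eq_bigr => j _ do
  rewrite (big_morph (mu _ ^~ _) (mu_addl _ _) (mu0l _ _)).
under eq_bigr => i _ do rewrite exchange_big.
by rewrite exchange_big.
Qed.

Lemma smul_sumr I (r : seq I) (P : pred I) (F : I -> nat -> V) f N :
  smul f (fun j => \sum_(k <- r | P k) F k j) N = \sum_(k <- r | P k) smul f (F k) N.
Proof.
rewrite /smul; under eq_bigr => i _ do under eq_bigr => j _ do
  rewrite (big_morph (mu _ _) (mu_addr _ _) (mu0r _ _)).
under eq_bigr => i _ do rewrite exchange_big.
by rewrite exchange_big.
Qed.

Lemma mu_monoml n a p i b : mu n (monom a p i) b = if i == a then mu n p b else 0.
Proof. by rewrite /monom; case: eqP => // _; rewrite mu0l. Qed.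

Lemma mu_monomr n a b q j : mu n a (monom b q j) = if j == b then mu n a q else 0.
Proof. by rewrite /monom; case: eqP => // _; rewrite mu0r. Qed.

Lemma monom_smul a p g N :
  smul (monom a p) g N = \sum_(j < N.+1 | (a + j <= N)%N) mu (N - a - j) p (g j).
Proof.
transitivity (\sum_(i < N.+1 | i == a :> nat)
                \sum_(j < N.+1 | (i + j <= N)%N) mu (N - i - j) p (g j)).
  rewrite big_mkcond; apply: eq_bigr => i _.
  case: eqP => [<- | /eqP hia]; first by under eq_bigr do rewrite mu_monoml eqxx.
  by rewrite big1 // => j _; rewrite mu_monoml (negbTE hia).
rewrite (big_ord1_eq _ (fun i => \sum_(j < N.+1 | (i + j <= N)%N) mu (N - i - j) p (g j))).
by case: ltnP => // ha; rewrite big1 // => j hj; lia.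
Qed.

Lemma smul_monom f b q N :
  smul f (monom b q) N = \sum_(i < N.+1 | (i + b <= N)%N) mu (N - i - b) (f i) q.
Proof.
rewrite /smul [RHS]big_mkcond; apply: eq_bigr => i _.
under eq_bigr => j _ do rewrite mu_monomr.
rewrite -big_mkcondr (big_ord1_cond_eq _ (fun j => mu (N - i - j) (f i) q) (fun j => i + j <= N)%N).
by rewrite andb_idl // => h; lia.
Qed.

Lemma smul_monom2 a b p q N :
  smul (monom a p) (monom b q) N = if (a + b <= N)%N then mu (N - a - b) p q else 0.
Proof.
rewrite monom_smul; under eq_bigr => j _ do rewrite mu_monomr.
rewrite -big_mkcondr (big_ord1_cond_eq _ (fun j => mu (N - a - j) p q) (fun j => a + j <= N)%N).
by rewrite andb_idl // => h; lia.
Qed.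

Lemma smul_decompl f g N M : (N < M)%N ->
  smul f g N = \sum_(a < M) smul (monom a (f a)) g N.
Proof.
move=> hNM; under [RHS]eq_bigr => a _ do rewrite monom_smul.
rewrite /smul (big_ord_widen M (fun a =>
  \sum_(j < N.+1 | (a + j <= N)%N) mu (N - a - j) (f a) (g j)) hNM) big_mkcond.
by apply: eq_bigr => a _; case: ifPn => // ha; rewrite big1 // => j hj; lia.
Qed.

Lemma smul_decompr f g N M : (N < M)%N ->
  smul f g N = \sum_(b < M) smul f (monom b (g b)) N.
Proof.
move=> hNM; under [RHS]eq_bigr => b _ do rewrite smul_monom.
rewrite /smul [RHS](exchange_big_dep xpredT) //=; apply: eq_bigr => i _.
rewrite (big_ord_widen_cond M (fun j => i + j <= N)%N
           (fun j => mu (N - i - j) (f i) (g j)) hNM).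
by apply: eq_bigl => j; rewrite andb_idr // => h; lia.
Qed.

Lemma smul_monom3l a b c p q r N :
  smul (smul (monom a p) (monom b q)) (monom c r) N =
  if (a + b + c <= N)%N then assocl (N - a - b - c) p q r else 0.
Proof.
transitivity (\sum_(i < N.+1 | (i + c <= N)%N && (a + b <= i)%N)
                mu (N - i - c) (mu (i - a - b) p q) r).
  rewrite smul_monom big_mkcondr; apply: eq_bigr => i _.
  by rewrite smul_monom2; case: ifP => // _; rewrite mu0l.
case: leqP => h; last by rewrite big1 // => i /andP[]; lia.
rewrite (eq_bigl (fun i : 'I_N.+1 => (a + b <= i)%N && (i + c <= N)%N));
  last by move=> i; rewrite andbC.
rewrite (sum_window (fun i => mu (N - i - c) (mu (i - a - b) p q) r)); last by lia.
rewrite /assocl subnDA.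
by apply: eq_bigr => k _; congr (mu _ (mu _ p q) r); lia.
Qed.

Lemma smul_monom3r a b c p q r N :
  smul (monom a p) (smul (monom b q) (monom c r)) N =
  if (a + b + c <= N)%N then assocr (N - a - b - c) p q r else 0.
Proof.
transitivity (\sum_(j < N.+1 | (a + j <= N)%N && (b + c <= j)%N)
                mu (N - a - j) p (mu (j - b - c) q r)).
  rewrite monom_smul big_mkcondr; apply: eq_bigr => j _.
  by rewrite smul_monom2; case: ifP => // _; rewrite mu0r.
case: leqP => h; last by rewrite big1 // => j /andP[]; lia.
rewrite (eq_bigl (fun j : 'I_N.+1 => (b + c <= j)%N && (j + a <= N)%N));
  last by move=> j; rewrite andbC (addnC a).
rewrite (sum_window (fun j => mu (N - a - j) p (mu (j - b - c) q r))); last by lia.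
have -> : (N - (b + c) - a = N - a - b - c)%N by lia.
rewrite /assocr.
by apply: eq_bigr => k _; congr (mu _ p (mu _ q r)); lia.
Qed.

Theorem smul_assoc :
  (forall K p q r, assocl K p q r = assocr K p q r) ->
  forall f g h N, smul (smul f g) h N = smul f (smul g h) N.
Proof.
move=> hK f g h N; have hN := ltnSn N.
have expand f' g' i : (i <= N)%N -> smul f' g' i =
    \sum_(a < N.+1) \sum_(b < N.+1) smul (monom a (f' a)) (monom b (g' b)) i.
  move=> hi; rewrite (@smul_decompl f' g' i N.+1 hi); apply: eq_bigr => a _.
  exact: smul_decompr.
transitivity (\sum_(a < N.+1) \sum_(b < N.+1) \sum_(c < N.+1)
  smul (smul (monom a (f a)) (monom b (g b))) (monom c (h c)) N).
  rewrite (smul_local (expand f g) (fun j _ => erefl (h j))) smul_suml.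
  apply: eq_bigr => a _.
  rewrite smul_suml; apply: eq_bigr => b _; exact: smul_decompr.
rewrite (@smul_decompl f (smul g h) N N.+1 hN); apply: eq_bigr => a _.
rewrite (smul_local (fun i _ => erefl (monom a (f a) i)) (expand g h)) smul_sumr.
apply: eq_bigr => b _.
rewrite smul_sumr; apply: eq_bigr => c _.
by rewrite smul_monom3l smul_monom3r hK.
Qed.

End SeriesProduct.

Section Multiplication.
Variables (R : comUnitRingType) (A : lmodType R) (mul : A -> A -> A).
Hypothesis mul_linl : forall b, linear (fun a => mul a b).
Hypothesis mul_linr : forall a, linear (mul a).

Lemma mulDl u v b : mul (u + v) b = mul u b + mul v b.
Proof. by have := mul_linl b 1 u v; rewrite !scale1r. Qed.
Lemma mulDr a u v : mul a (u + v) = mul a u + mul a v.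
Proof. by have := mul_linr a 1 u v; rewrite !scale1r. Qed.
Lemma mul0l b : mul 0 b = 0.
Proof. by apply/(addrI (mul 0 b)); rewrite -mulDl !addr0. Qed.
Lemma mul0r a : mul a 0 = 0.
Proof. by apply/(addrI (mul a 0)); rewrite -mulDr !addr0. Qed.
Lemma mulZl k u b : mul (k *: u) b = k *: mul u b.
Proof. by have := mul_linl b k u 0; rewrite !addr0 mul0l addr0. Qed.
Lemma mulZr k a u : mul a (k *: u) = k *: mul a u.
Proof. by have := mul_linr a k u 0; rewrite !addr0 mul0r addr0. Qed.
Lemma mulBl u v b : mul (u - v) b = mul u b - mul v b.
Proof. by rewrite mulDl -scaleN1r mulZl scaleN1r. Qed.
Lemma mulBr a u v : mul a (u - v) = mul a u - mul a v.
Proof. by rewrite mulDr -scaleN1r mulZr scaleN1r. Qed.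
Lemma mul_suml I (r : seq I) (P : pred I) (F : I -> A) b :
  mul (\sum_(i <- r | P i) F i) b = \sum_(i <- r | P i) mul (F i) b.
Proof. exact: (big_morph (mul ^~ b) (fun u v => mulDl u v b) (mul0l b)). Qed.
Lemma mul_sumr I (r : seq I) (P : pred I) (F : I -> A) a :
  mul a (\sum_(i <- r | P i) F i) = \sum_(i <- r | P i) mul a (F i).
Proof. exact: (big_morph (mul a) (mulDr a) (mul0r a)). Qed.

End Multiplication.

Section FallingPowers.
Variables (R : comUnitRingType) (A : lmodType R).

Fixpoint fpow (D : A -> A) (s d : R) (n : nat) (x : A) : A :=
  if n is k.+1 then D (fpow D s d k x) - (s + k%:R * d) *: fpow D s d k x else x.

Lemma fpow_iter D n x : fpow D 0 0 n x = iter n D x.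
Proof. by elim: n => //= n ->; rewrite mulr0 addr0 scale0r subr0. Qed.

Lemma fpow_falling D n x : fpow D 0 1 n x = falling D n x.
Proof. by elim: n => //= n ->; rewrite mulr1 add0r scaler_nat. Qed.

Lemma fpow_split D s d l k x :
  fpow D s d (l + k) x = fpow D (s + l%:R * d) d k (fpow D s d l x).
Proof.
by elim: k => [|k IH]; rewrite ?addn0 // addnS /= IH natrD mulrDl addrA.
Qed.

Lemma fpowD (D : {linear A -> A}) s d n : {morph fpow D s d n : x y / x + y}.
Proof.
by move=> x y; elim: n => //= n ->; rewrite linearD scalerDr opprD addrACA.
Qed.

Lemma fpowZ (D : {linear A -> A}) s d n k x :
  fpow D s d n (k *: x) = k *: fpow D s d n x.
Proof.
elim: n => //= n ->; rewrite linearZ scalerBr; congr (_ - _).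
by rewrite !scalerA mulrC.
Qed.

End FallingPowers.

Section Leibniz.
Variables (R : comUnitRingType) (A : lmodType R) (mul : A -> A -> A).
Hypothesis mul_linl : forall b, linear (fun a => mul a b).
Hypothesis mul_linr : forall a, linear (mul a).
Variable D : {linear A -> A}.
Hypothesis hD : is_derivation mul D.

Lemma twisted_derivation s t y w :
  D (mul y w) - (s + t) *: mul y w = mul (D y - s *: y) w + mul y (D w - t *: w).
Proof.
rewrite hD (mulBl mul_linl) (mulBr mul_linr) (mulZl mul_linl) (mulZr mul_linr).
by rewrite scalerDl opprD addrACA.
Qed.

Lemma fpow_leibniz s t u : s + t = u -> forall d n y w,
  fpow D u d n (mul y w) =
  \sum_(j < n.+1) mul (fpow D s d j y) (fpow D t d (n - j) w) *+ 'C(n, j).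
Proof.
move=> <- d n y w; elim: n => [|n IH]; first by rewrite big_ord1.
pose X j := mul (fpow D s d j y) (fpow D t d (n.+1 - j) w).
transitivity (\sum_(j < n.+1) (X j.+1 + X j) *+ 'C(n, j)); last exact: pascal_sum.
rewrite /= IH linear_sum scaler_sumr -sumrB; apply: eq_bigr => j _.
rewrite raddfMn -scalerMnr -mulrnBl; congr (_ *+ _).
have hj : (j <= n)%N by rewrite -ltnS.
rewrite (_ : s + t + n%:R * d = (s + j%:R * d) + (t + (n - j)%:R * d));
  last by rewrite natrB //; ring.
by rewrite twisted_derivation /X subSS subSn.
Qed.

End Leibniz.

Section Commutation.
Variables (R : comUnitRingType) (A : lmodType R) (D1 D2 : {linear A -> A}).
Hypothesis hcomm : forall a, D1 (D2 a) - D2 (D1 a) = D1 a.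

(* [D1, D2] = D1 means D1 o (D2 - s) = (D2 - s + 1) o D1. *)
Lemma D1_fpow s m x : D1 (fpow D2 s 1 m x) = fpow D2 (s - 1) 1 m (D1 x).
Proof.
elim: m => //= m IH; rewrite linearB linearZ -IH.
move/eqP: (hcomm (fpow D2 s 1 m x)); rewrite subr_eq => /eqP ->.
rewrite (_ : s - 1 + m%:R * 1 = (s + m%:R * 1) - 1); last by ring.
by rewrite scalerBl scale1r opprB -addrA addrCA.
Qed.

Lemma iter_D1_fpow l s m x :
  iter l D1 (fpow D2 s 1 m x) = fpow D2 (s - l%:R) 1 m (iter l D1 x).
Proof.
elim: l s => [|l IH] s; first by rewrite subr0.
by rewrite !iterS IH D1_fpow -addn1 natrD opprD addrA.
Qed.

End Commutation.

Section Factorials.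
Variable R : comUnitRingType.
Hypothesis hQ : forall n : nat, n.+1%:R \is a @GRing.unit R.

Lemma fact_unit n : n`!%:R \is a @GRing.unit R.
Proof. by elim: n => [|n IH]; rewrite ?unitr1 // factS natrM unitrM hQ IH. Qed.

Lemma binomial_factorial a b :
  'C(a + b, a)%:R * ((a + b)`!%:R)^-1 = (a`!%:R)^-1 * (b`!%:R)^-1 :> R.
Proof.
have hfact := bin_fact (leq_addr b a); rewrite addKn in hfact.
have ua := fact_unit a; have ub := fact_unit b.
have uC : 'C(a + b, a)%:R \is a @GRing.unit R.
  by have := fact_unit (a + b); rewrite -hfact natrM unitrM => /andP[].
by rewrite -hfact !natrM invrM ?unitrM ?ua ?ub // mulrC divrK // invrM // mulrC.
Qed.

End Factorials.

Section StarCoefficients.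
Variables (R : comUnitRingType) (A : lmodType R) (mul : A -> A -> A).
Hypothesis hQ : forall n : nat, n.+1%:R \is a @GRing.unit R.
Hypothesis mul_linl : forall b, linear (fun a => mul a b).
Hypothesis mul_linr : forall a, linear (mul a).
Hypothesis mulA : forall a b c, mul (mul a b) c = mul a (mul b c).
Variables (D1 D2 : {linear A -> A}).
Hypothesis hD1 : is_derivation mul D1.
Hypothesis hD2 : is_derivation mul D2.
Hypothesis hcomm : forall a, D1 (D2 a) - D2 (D1 a) = D1 a.

Local Notation mu := (star_coef mul D1 D2).

Lemma muE n a b : mu n a b = (n`!%:R)^-1 *: mul (fpow D1 0 0 n a) (fpow D2 0 1 n b).
Proof. by rewrite /star_coef fpow_iter fpow_falling. Qed.

Lemma mu_addl n b : {morph mu n ^~ b : x y / x + y}.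
Proof. by move=> x y; rewrite !muE fpowD (mulDl mul_linl) scalerDr. Qed.

Lemma mu_addr n a : {morph mu n a : x y / x + y}.
Proof. by move=> x y; rewrite !muE fpowD (mulDr mul_linr) scalerDr. Qed.

(* The common expansion of assocl K and assocr K: the term with D1^P on p,
   c factors of D2 on q and P - c further factors of D2 on r. *)
Definition assoc_term K p q r (P c : nat) : A :=
  ((c`!%:R)^-1 * (((P - c)`!%:R)^-1 * ((K - P)`!%:R)^-1)) *:
  mul (iter P D1 p)
    (mul (fpow D2 (- (K - P)%:R) 1 c (iter (K - P) D1 q))
         (fpow D2 (K - P)%:R 1 (P - c) (fpow D2 0 1 (K - P) r))).

(* Expand D1^(K-c) on the product by Leibniz, commute D1 past [D2]_c and
   split [D2]_(K-c) at K - P. *)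
Lemma assocl_expand K p q r :
  assocl mu K p q r = \sum_(P < K.+1) \sum_(c < P.+1) assoc_term K p q r P c.
Proof.
pose T c k := ((((K - c)`!%:R)^-1 * (c`!%:R)^-1 * 'C(K - c, k)%:R) *:
  mul (mul (iter k D1 (iter c D1 p)) (iter (K - c - k) D1 (fpow D2 0 1 c q)))
      (fpow D2 0 1 (K - c) r) : A).
transitivity (\sum_(c < K.+1) \sum_(k < (K - c).+1) T c k).
  apply: eq_bigr => c _.
  rewrite !muE fpowZ (mulZl mul_linl) scalerA.
  rewrite (fpow_leibniz mul_linl mul_linr hD1 (addr0 0)) (mul_suml mul_linl).
  rewrite scaler_sumr; apply: eq_bigr => k _.
  by rewrite -scaler_nat (mulZl mul_linl) scalerA !fpow_iter.
rewrite sum_triangle; apply: eq_bigr => P _; apply: eq_bigr => c _.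
have hP := ltn_ord P; have hc := ltn_ord c.
rewrite /T /assoc_term -iterD subnK; last by lia.
have -> : (K - c - (P - c) = K - P)%N by lia.
rewrite (iter_D1_fpow hcomm) sub0r.
have -> : (K - c = (K - P) + (P - c))%N by lia.
rewrite fpow_split add0r mulr1 mulA; congr (_ *: _).
have hb := binomial_factorial hQ (P - c) (K - P); rewrite addnC in hb.
by rewrite -hb; ring.
Qed.

(* Expand [D2]_(K-c) on the product by Leibniz with shifts -c and c, then
   reindex c as K - P. *)
Lemma assocr_expand K p q r :
  assocr mu K p q r = \sum_(P < K.+1) \sum_(c < P.+1) assoc_term K p q r P c.
Proof.
transitivity (\sum_(c < K.+1) \sum_(j < (K - c).+1)
  (((K - c)`!%:R)^-1 * (c`!%:R)^-1 * 'C(K - c, j)%:R) *: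
    mul (iter (K - c) D1 p)
      (mul (fpow D2 (- c%:R) 1 j (iter c D1 q))
           (fpow D2 c%:R 1 (K - c - j) (fpow D2 0 1 c r)))).
  apply: eq_bigr => c _.
  rewrite !muE fpowZ (mulZr mul_linr) scalerA.
  rewrite (fpow_leibniz mul_linl mul_linr hD2 (addNr c%:R)) (mul_sumr mul_linr).
  rewrite scaler_sumr; apply: eq_bigr => j _.
  by rewrite -scaler_nat (mulZr mul_linr) scalerA !fpow_iter.
rewrite (reindex_inj rev_ord_inj) /=; apply: eq_bigr => P _.
have hP := ltn_ord P; rewrite subSS subKn; last by lia.
apply: eq_bigr => j _; have hj := ltn_ord j.
rewrite /assoc_term; congr (_ *: _).
have hb := binomial_factorial hQ j (P - j); rewrite subnKC in hb; last by lia.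
by rewrite mulrA -hb; ring.
Qed.

Lemma star_coef_assoc K p q r : assocl mu K p q r = assocr mu K p q r.
Proof. by rewrite assocl_expand assocr_expand. Qed.

End StarCoefficients.

Theorem theorem5 (R : comUnitRingType) (A : lmodType R) (mul : A -> A -> A)
  (hQ : forall n : nat, n.+1%:R \is a @GRing.unit R)
  (mul_linl : forall b, linear (fun a => mul a b))
  (mul_linr : forall a, linear (mul a))
  (mulA : forall a b c, mul (mul a b) c = mul a (mul b c))
  (D1 D2 : {linear A -> A})
  (hD1 : is_derivation mul D1) (hD2 : is_derivation mul D2)
  (hcomm : forall a, D1 (D2 a) - D2 (D1 a) = D1 a) :
  (forall a b, star_coef mul D1 D2 0 a b = mul a b) /\
  (forall a b, star_coef mul D1 D2 1 a b = mul (D1 a) (D2 b)) /\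
  (forall f g h : nat -> A,
      star mul D1 D2 (star mul D1 D2 f g) h = star mul D1 D2 f (star mul D1 D2 g h)).
Proof.
split; first by move=> a b; rewrite /star_coef /= invr1 scale1r.
split; first by move=> a b; rewrite /star_coef /= mulr0n subr0 invr1 scale1r.
move=> f g h; apply: functional_extensionality => N.
apply: (smul_assoc (mu_addl mul_linl D1 D2) (mu_addr mul_linr D1 D2)) => K p q r.
exact (star_coef_assoc hQ mul_linl mul_linr mulA hD1 hD2 hcomm K p q r).
Qed.
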